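(* Let $G$ be a $(2K_2, K_1+P_4)$-free graph. Then $\chi(G)\le \omega(G)+2$.
   Context: All graphs are finite, simple and undirected. $P_n$, $K_n$ denote the path and complete graph on $n$ vertices; $2K_2$ is the disjoint union of two copies of $K_2$; $G_1+G_2$ denotes the join of $G_1$ and $G_2$ (disjoint union plus all edges between them), so $K_1+P_4$ is a vertex adjacent to all vertices of an induced $P_4$. A graph is $\mathcal F$-free if it has no induced subgraph isomorphic to a member of $\mathcal F$. $\chi(G)$ is the chromatic number and $\omega(G)$ the clique number. *)

(* A simple graph is a symmetric irreflexive relation on a finType. *)
From mathcomp Require Import all_boot.
Set Implicit Arguments. Unset Strict Implicit. Unset Printing Implicit Defensive.

Definition induced_sub (H T : finType) (eH : rel H) (e : rel T) : Prop :=
  exists f : H -> T, injective f /\ forall x y, e (f x) (f y) = eH x y.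

Definition adj_2K2 : rel 'I_4 := fun x y =>
  let a := nat_of_ord x in let b := nat_of_ord y in
  ((a == 0) && (b == 1)) || ((a == 1) && (b == 0)) ||
  ((a == 2) && (b == 3)) || ((a == 3) && (b == 2)).

Definition adj_K1P4 : rel 'I_5 := fun x y =>
  let a := nat_of_ord x in let b := nat_of_ord y in
  (a != b) && ((a == 4) || (b == 4) || (a == b.+1) || (b == a.+1)).

Definition colorable (T : finType) (e : rel T) (k : nat) : bool :=
  [exists c : {ffun T -> 'I_k}, [forall x, forall y, e x y ==> (c x != c y)]].

Lemma colorable_exists (T : finType) (e : rel T) (irr : irreflexive e) :
  exists k, colorable e k.
Proof.
exists #|T|; apply/existsP; exists [ffun x => enum_rank x].
apply/forallP => x; apply/forallP => y; apply/implyP => exy.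
rewrite !ffunE; apply/negP => /eqP /enum_rank_inj Exy.
by rewrite Exy irr in exy.
Qed.

Definition chi (T : finType) (e : rel T) (irr : irreflexive e) : nat :=
  ex_minn (colorable_exists irr).

Definition clique (T : finType) (e : rel T) (A : {set T}) : bool :=
  [forall x in A, forall y in A, (x != y) ==> e x y].

Definition omega (T : finType) (e : rel T) : nat :=
  \max_(A : {set T} | clique e A) #|A|.

From mathcomp Require Import all_boot zify.
Set Implicit Arguments. Unset Strict Implicit. Unset Printing Implicit Defensive.

(* Fix a maximum clique K of size m >= 2 and two of its vertices v, k.  The
   neighborhood of v is P4-free because G is (K_1+P_4)-free; a Grundy coloring
   of it uses at most m - 1 colors, since a vertex of color i is the top of a
   clique of size i + 1 inside N(v), which together with v is a clique of G.  The
   non-neighbors of v split into three independent sets: those missing k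
   (2K_2 with vk), those seeing all of K - v (two adjacent ones would extend
   K - v to a clique of size m + 1), and the others (two adjacent ones give a
   2K_2 or a K_1+P_4 centered at k). *)

Definition twin_free (H : finType) (eH : rel H) : Prop :=
  forall x y, ~~ eH x y -> eH x =1 eH y -> x = y.

Lemma twin_free_induced_sub (H T : finType) (eH : rel H) (e : rel T) (f : H -> T) :
  twin_free eH -> irreflexive e -> (forall x y, e (f x) (f y) = eH x y) ->
  induced_sub eH e.
Proof.
move=> twinH irr fe; exists f; split=> // x y fxy; apply: twinH => [|z].
  by rewrite -fe fxy irr.
by rewrite -!fe fxy.
Qed.

Lemma twin_free_2K2 : twin_free adj_2K2.
Proof.
move=> x y nxy twin; apply/val_inj.
move: x y nxy twin => [[|[|[|[|x]]]] Hx] [[|[|[|[|y]]]] Hy] //= _ twin.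
all: first [ by have := twin (@Ordinal 4 0 erefl) | by have := twin (@Ordinal 4 1 erefl)
           | by have := twin (@Ordinal 4 2 erefl) | by have := twin (@Ordinal 4 3 erefl) ].
Qed.

Lemma twin_free_K1P4 : twin_free adj_K1P4.
Proof.
move=> x y nxy twin; apply/val_inj.
move: x y nxy twin => [[|[|[|[|[|x]]]]] Hx] [[|[|[|[|[|y]]]]] Hy] //= _ twin.
all: first [ by have := twin (@Ordinal 5 0 erefl) | by have := twin (@Ordinal 5 1 erefl)
           | by have := twin (@Ordinal 5 2 erefl) | by have := twin (@Ordinal 5 3 erefl)
           | by have := twin (@Ordinal 5 4 erefl) ].
Qed.

Section Graph.
Variables (T : finType) (e : rel T).
Hypotheses (sym : symmetric e) (irr : irreflexive e).

Lemma induced_2K2 a b c d :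
  e a b -> e c d -> ~~ e a c -> ~~ e a d -> ~~ e b c -> ~~ e b d ->
  induced_sub adj_2K2 e.
Proof.
move=> eab ecd /negbTE nac /negbTE nad /negbTE nbc /negbTE nbd.
apply: (@twin_free_induced_sub _ _ _ _ (fun i : 'I_4 => nth a [:: a; b; c; d] i)
          twin_free_2K2 irr).
by move=> [[|[|[|[|x]]]] Hx] [[|[|[|[|y]]]] Hy] //=;
  rewrite ?irr ?eab ?ecd ?nac ?nad ?nbc ?nbd // sym ?eab ?ecd ?nac ?nad ?nbc ?nbd.
Qed.

Lemma induced_K1P4 w p0 p1 p2 p3 :
  e p0 p1 -> e p1 p2 -> e p2 p3 -> ~~ e p0 p2 -> ~~ e p0 p3 -> ~~ e p1 p3 ->
  e w p0 -> e w p1 -> e w p2 -> e w p3 -> induced_sub adj_K1P4 e.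
Proof.
move=> e01 e12 e23 /negbTE n02 /negbTE n03 /negbTE n13 ew0 ew1 ew2 ew3.
apply: (@twin_free_induced_sub _ _ _ _ (fun i : 'I_5 => nth w [:: p0; p1; p2; p3; w] i)
          twin_free_K1P4 irr).
by move=> [[|[|[|[|[|x]]]]] Hx] [[|[|[|[|[|y]]]]] Hy] //=;
  rewrite ?irr ?e01 ?e12 ?e23 ?n02 ?n03 ?n13 ?ew0 ?ew1 ?ew2 ?ew3 // sym
          ?e01 ?e12 ?e23 ?n02 ?n03 ?n13 ?ew0 ?ew1 ?ew2 ?ew3.
Qed.

Lemma edges_2K2_free a b c d : ~ induced_sub adj_2K2 e ->
  e a b -> e c d -> [|| e a c, e a d, e b c | e b d].
Proof.
move=> h2K2 eab ecd; apply/negPn/negP; rewrite !negb_or => /and4P [nac nad nbc nbd].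
exact/h2K2/(induced_2K2 eab ecd).
Qed.

Definition P4_free (S : {set T}) : Prop :=
  forall a b c d, a \in S -> b \in S -> c \in S -> d \in S ->
  e a b -> e b c -> e c d -> ~~ e a c -> ~~ e a d -> ~~ e b d -> False.

Lemma P4_free_neighborhood v :
  ~ induced_sub adj_K1P4 e -> P4_free [set x | e v x].
Proof.
move=> hK1P4 a b c d; rewrite !inE => va vb vc vd eab ebc ecd nac nad nbd.
exact/hK1P4/(induced_K1P4 eab ebc ecd nac nad nbd va vb vc vd).
Qed.

Lemma cliqueP (A : {set T}) :
  reflect {in A &, forall x y, x != y -> e x y} (clique e A).
Proof.
apply: (iffP forall_inP) => [cA x y xA yA | cA x xA].
  exact/implyP/(forall_inP (cA x xA)).
by apply/forall_inP => y yA; apply/implyP; apply: cA.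
Qed.

Lemma clique_setU1 x (A : {set T}) :
  clique e A -> {in A, forall y, e x y} -> clique e (x |: A).
Proof.
move=> /cliqueP cA xA; apply/cliqueP => a b.
case/setU1P => [-> | aA] /setU1P [-> | bA]; rewrite ?eqxx // => ab.
- exact: xA.
- by rewrite sym xA.
- exact: cA.
Qed.

Lemma clique_subset (A B : {set T}) : B \subset A -> clique e A -> clique e B.
Proof.
move=> BA /cliqueP cA; apply/cliqueP => x y xB yB.
by apply: cA; apply: (subsetP BA).
Qed.

Lemma clique_le_omega (A : {set T}) : clique e A -> #|A| <= omega e.
Proof. by move=> cA; rewrite /omega (bigD1 A cA) leq_maxl. Qed.

Lemma max_clique_exists : exists2 K : {set T}, clique e K & #|K| = omega e.
Proof.
have c0 : clique e set0 by apply/forall_inP => x; rewrite in_set0.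
have : 0 < #|[pred A : {set T} | clique e A]| by apply/card_gt0P; exists set0.
move=> /(eq_bigmax_cond (fun A : {set T} => #|A|)) [K cK EK].
by exists K; rewrite // /omega -EK.
Qed.

Lemma omega_ge2 x y : e x y -> 2 <= omega e.
Proof.
move=> exy; have xy : x != y by apply: contraTneq exy => ->; rewrite irr.
have c1 : clique e [set y] by apply/cliqueP => a b /set1P -> /set1P ->; rewrite eqxx.
have cxy : clique e (x |: [set y]) by apply: clique_setU1 => // z /set1P ->.
by have := clique_le_omega cxy; rewrite cardsU1 in_set1 xy cards1.
Qed.

Definition proper_on (S : {set T}) (g : T -> nat) : Prop :=
  {in S &, forall x y, e x y -> g x != g y}.

Definition grundy_on (S : {set T}) (g : T -> nat) : Prop :=
  {in S, forall x j, j < g x -> exists2 y, y \in S & e x y && (g y == j)}.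

Lemma colorable_of_coloring k (c : T -> nat) :
  (forall x, c x < k) -> (forall x y, e x y -> c x != c y) -> colorable e k.
Proof.
move=> ck cP; apply/existsP; exists [ffun x => Ordinal (ck x)].
apply/forallP => x; apply/forallP => y; apply/implyP => exy.
by rewrite !ffunE -val_eqE /=; apply: cP.
Qed.

Lemma chi_le_colorable k : colorable e k -> chi irr <= k.
Proof. by rewrite /chi; case: ex_minnP => m _; apply. Qed.

Lemma colorable_split (S : {set T}) a b (f g : T -> nat) :
  proper_on S f -> {in S, forall x, f x < a} ->
  proper_on (~: S) g -> {in ~: S, forall x, g x < b} -> colorable e (a + b).
Proof.
move=> fP fa gP gb.
pose c x := if x \in S then f x else a + g x.
apply: (@colorable_of_coloring _ c) => [x | x y exy]; rewrite /c.
  by case: ifP => xS; [rewrite ltn_addr ?fa | rewrite ltn_add2l gb // inE xS].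
case: ifP => xS; case: ifP => yS.
- exact: fP.
- by have := fa x xS; lia.
- by have := fa y yS; lia.
- by rewrite eqn_add2l gP // inE ?xS ?yS.
Qed.

(* A proper coloring of minimal total weight is a Grundy coloring: a vertex
   with no neighbor of color j < g x could be recolored j. *)
Lemma grundy_coloring_exists (S : {set T}) :
  exists2 g : T -> nat, proper_on S g & grundy_on S g.
Proof.
pose proper (h : {ffun T -> 'I_#|T|}) :=
  [forall x in S, forall y in S, e x y ==> (h x != h y)].
have proper_rank : proper [ffun x => enum_rank x].
  apply/forall_inP => x _; apply/forall_inP => y _; apply/implyP => exy.
  by rewrite !ffunE; apply: contraTneq exy => /enum_rank_inj ->; rewrite irr.
have properP h : proper h -> proper_on S (fun x => val (h x)).
  by move=> /forall_inP hP x y xS yS exy; exact: implyP (forall_inP (hP x xS) y yS) exy.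
pose weight (h : {ffun T -> 'I_#|T|}) := \sum_(x in S) (h x : nat).
have [g gproper gmin] := arg_minnP weight proper_rank.
exists (fun x => val (g x)); first exact: properP.
move=> x xS j ltj.
have [/exists_inP // | /exists_inPn noj] :=
  boolP [exists y in S, e x y && (g y == j :> nat)].
have ltjT : j < #|T| by apply: ltn_trans ltj (ltn_ord (g x)).
pose g' : {ffun T -> 'I_#|T|} := [ffun z => if z == x then Ordinal ltjT else g z].
have g'proper : proper g'.
  apply/forall_inP => u uS; apply/forall_inP => w wS; apply/implyP => euw.
  rewrite !ffunE -val_eqE.
  case: (u =P x) => [Eu | nu]; case: (w =P x) => [Ew | nw] /=.
  - by rewrite Eu Ew irr in euw.
  - by rewrite eq_sym; have := noj w wS; rewrite -Eu euw.
  - by have := noj u uS; rewrite -Ew sym euw.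
  - exact: (properP _ gproper).
have := gmin g' g'proper; rewrite /weight (bigD1 x xS) [X in _ <= X](bigD1 x xS) /=.
have -> : \sum_(z in S | z != x) (g' z : nat) = \sum_(z in S | z != x) (g z : nat).
  by apply: eq_bigr => z /andP [_ zx]; rewrite ffunE (negbTE zx).
by rewrite ffunE eqxx /= leq_add2r leqNgt ltj.
Qed.

(* Take q0 in Q with fewest neighbors in I and y such a neighbor.  If some
   q in Q missed y, q would have a neighbor z in I that q0 misses, and
   y q0 q z would be an induced P4. *)
Lemma common_neighbor_in_stable (S I Q : {set T}) :
  P4_free S -> I \subset S -> Q \subset S -> clique e Q ->
  {in I &, forall y z, ~~ e y z} -> {in Q, forall q, exists2 y, y \in I & e q y} ->
  Q != set0 -> exists2 y, y \in I & {in Q, forall q, e q y}.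
Proof.
move=> hS IS QS cQ stI hasI /set0Pn [q1 q1Q].
pose N q := [set y in I | e q y].
have [q0 q0Q q0min] := arg_minnP (fun q => #|N q|) q1Q.
have [y yI eq0y] := hasI q0 q0Q.
exists y => // q qQ; apply/negPn/negP => nqy.
have [z] : exists2 z, z \in N q & z \notin N q0.
  apply/subsetPn; apply: contra nqy => sub.
  have EN : N q = N q0 by apply/eqP; rewrite eqEcard sub q0min.
  have : y \in N q by rewrite EN inE yI eq0y.
  by rewrite inE => /andP [].
rewrite !inE => /andP [zI eqz]; rewrite zI /= => nq0z.
have q0q : q0 != q by apply: contraNneq nqy => <-.
apply: (hS y q0 q z (subsetP IS y yI) (subsetP QS q0 q0Q) (subsetP QS q qQ)
          (subsetP IS z zI)) => //.
- by rewrite sym.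
- exact: (cliqueP _ cQ).
- by rewrite sym.
- exact: stI.
Qed.

Lemma grundy_clique (S : {set T}) (g : T -> nat) :
  P4_free S -> proper_on S g -> grundy_on S g ->
  {in S, forall x, exists Q : {set T}, [/\ clique e Q, Q \subset S & #|Q| = (g x).+1]}.
Proof.
move=> hS gP gG x xS.
suff /(_ (g x) (leqnn _)) [Q [cQ QS cardQ _]] : forall t, t <= g x ->
    exists Q : {set T},
      [/\ clique e Q, Q \subset S, #|Q| = t.+1 & {in Q, forall q, g x - t <= g q}].
  by exists Q.
elim=> [_ | t IH ltx].
  exists [set x]; split; rewrite ?sub1set ?cards1 //.
    by apply/cliqueP => a b /set1P -> /set1P ->; rewrite eqxx.
  by move=> q /set1P ->; rewrite subn0.
have [Q [cQ QS cardQ colQ]] := IH (ltnW ltx).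
pose I := [set y in S | g y == g x - t.+1].
have [y] : exists2 y, y \in I & {in Q, forall q, e q y}.
  apply: (common_neighbor_in_stable hS _ QS cQ).
  - by apply/subsetP => y; rewrite inE => /andP [].
  - move=> y z; rewrite !inE => /andP [yS /eqP gy] /andP [zS /eqP gz].
    by apply/negP => /(gP y z yS zS); rewrite gy gz eqxx.
  - move=> q qQ; have qS := subsetP QS q qQ.
    have [|y yS /andP [eqy gy]] := gG q qS (g x - t.+1); first by have := colQ q qQ; lia.
    by exists y; rewrite // inE yS.
  - by rewrite -card_gt0 cardQ.
rewrite inE => /andP [yS /eqP gy] Qy.
have yQ : y \notin Q by apply/negP => /colQ; lia.
exists (y |: Q); split.
- by apply: clique_setU1 => // q /Qy; rewrite sym.
- by rewrite subUset sub1set yS QS.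
- by rewrite cardsU1 yQ cardQ.
- by move=> q /setU1P [-> | /colQ]; lia.
Qed.

Lemma neighborhood_coloring v : ~ induced_sub adj_K1P4 e ->
  exists2 f : T -> nat, proper_on [set x | e v x] f &
    {in [set x | e v x], forall x, f x < omega e - 1}.
Proof.
move=> hK1P4; have [f fP fG] := grundy_coloring_exists [set x | e v x].
exists f => // x xN.
have [Q [cQ QN cardQ]] := grundy_clique (P4_free_neighborhood hK1P4) fP fG xN.
have vQ : v \notin Q by apply/negP => /(subsetP QN); rewrite inE irr.
have cvQ : clique e (v |: Q) by apply: clique_setU1 => // q /(subsetP QN); rewrite inE.
by have := clique_le_omega cvQ; rewrite cardsU1 vQ cardQ; lia.
Qed.

Lemma nonneighbors_missing_stable v k x y : ~ induced_sub adj_2K2 e -> e v k ->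
  ~~ e v x -> ~~ e v y -> ~~ e k x -> ~~ e k y -> ~~ e x y.
Proof.
move=> h2K2 evk vx vy kx ky; apply/negP => exy.
have := edges_2K2_free h2K2 evk exy.
by rewrite (negbTE vx) (negbTE vy) (negbTE kx) (negbTE ky).
Qed.

Section MaximumClique.
Variables (K : {set T}) (v : T).
Hypotheses (cK : clique e K) (maxK : #|K| = omega e) (vK : v \in K).

Lemma nonneighbor_notin_clique x : ~~ e v x -> x \notin K :\ v.
Proof.
move=> vx; apply: contra vx => /setD1P [xv xK].
by have /cliqueP := cK; apply; rewrite // eq_sym.
Qed.

Lemma nonneighbors_seeing_rest_stable x y : ~~ e v x -> ~~ e v y ->
  {in K :\ v, forall z, e z x} -> {in K :\ v, forall z, e z y} -> ~~ e x y.
Proof.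
move=> vx vy Kx Ky; apply/negP => exy.
have xy : x != y by apply: contraTneq exy => ->; rewrite irr.
have cKv : clique e (K :\ v) by apply: clique_subset cK; apply: subsetDl.
have cyK : clique e (y |: K :\ v) by apply: clique_setU1 => // z /Ky; rewrite sym.
have cxyK : clique e (x |: (y |: K :\ v)).
  by apply: clique_setU1 => // z /setU1P [-> // | /Kx]; rewrite sym.
have := clique_le_omega cxyK; rewrite -maxK (cardsD1 v K) vK !cardsU1 in_setU1.
by rewrite negb_or xy !nonneighbor_notin_clique //=; lia.
Qed.

(* y0 and y are adjacent (else xy, v y0 is a 2K_2), so k dominates the
   induced path v y0 y x. *)
Lemma nonneighbors_missing_rest_stable k x y y0 :
  ~ induced_sub adj_2K2 e -> ~ induced_sub adj_K1P4 e -> k \in K ->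
  ~~ e v x -> ~~ e v y -> e k x -> e k y -> y0 \in K :\ v -> ~~ e y0 x -> ~~ e x y.
Proof.
move=> h2K2 hK1P4 kK vx vy kx ky /setD1P [y0v y0K] y0x; apply/negP => exy.
have /cliqueP adjK := cK.
have kv : k != v by apply: contraTneq kx => ->.
have y0k : y0 != k by apply: contraNneq y0x => ->.
have evy0 : e v y0 by apply: adjK; rewrite // eq_sym.
have ey0y : e y0 y.
  have := edges_2K2_free h2K2 exy evy0.
  by rewrite [e x v]sym [e x y0]sym [e y v]sym (negbTE vx) (negbTE y0x) (negbTE vy) sym.
apply: hK1P4; apply: (@induced_K1P4 k v y0 y x) => //.
- by rewrite sym.
- by apply: adjK.
- by apply: adjK; rewrite // eq_sym.
Qed.

Lemma nonneighborhood_coloring k :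
  ~ induced_sub adj_2K2 e -> ~ induced_sub adj_K1P4 e -> k \in K -> k != v ->
  exists2 g : T -> nat, proper_on (~: [set x | e v x]) g &
    {in ~: [set x | e v x], forall x, g x < 3}.
Proof.
move=> h2K2 hK1P4 kK kv.
pose sees_rest x := [forall z in K :\ v, e z x].
exists (fun x => if ~~ e k x then 0 else if sees_rest x then 1 else 2); last first.
  by move=> x _; do !case: ifP.
move=> x y; rewrite !inE => vx vy exy.
have evk : e v k by have /cliqueP := cK; apply; rewrite // eq_sym.
case: (boolP (e k x)) => kx; case: (boolP (e k y)) => ky /=;
  case: (boolP (sees_rest x)) => [/forall_inP Rx | /forall_inPn [y0 y0K y0x]];
  case: (boolP (sees_rest y)) => [/forall_inP Ry | _] //.
- by rewrite (negbTE (nonneighbors_seeing_rest_stable vx vy Rx Ry)) in exy.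
- have := nonneighbors_missing_rest_stable h2K2 hK1P4 kK vx vy kx ky y0K y0x.
  by rewrite exy.
all: by rewrite (negbTE (nonneighbors_missing_stable h2K2 evk vx vy kx ky)) in exy.
Qed.

End MaximumClique.

End Graph.

Theorem corollary3p2 (T : finType) (e : rel T)
  (sym : symmetric e) (irr : irreflexive e)
  (h2K2 : ~ induced_sub adj_2K2 e) (hK1P4 : ~ induced_sub adj_K1P4 e) :
  chi irr <= omega e + 2.
Proof.
have [K cK maxK] := max_clique_exists e.
have [small | big] := leqP (omega e) 1.
  apply/chi_le_colorable/(@colorable_of_coloring _ _ _ (fun _ => 0)) => [x | x y exy].
    by rewrite addn2.
  by have := omega_ge2 sym irr exy; lia.
have [v vK] : exists v, v \in K by apply/card_gt0P; lia.
have [k] : exists k, k \in K :\ v.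
  by apply/card_gt0P; move: maxK; rewrite (cardsD1 v K) vK; lia.
rewrite in_setD1 => /andP [kv kK].
have [f fP fle] := neighborhood_coloring sym irr v hK1P4.
have [g gP gle] := nonneighborhood_coloring sym irr cK maxK vK h2K2 hK1P4 kK kv.
by have := chi_le_colorable irr (colorable_split fP fle gP gle); lia.
Qed.
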